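(* Let $d\ge1$, $K\ge2$, $n\ge1$ be such that no Softmax Code in $\mathrm{OB}(d,K)$ has a rattler and no solution of the Tammes problem in $\mathrm{OB}(d,K)$ has a rattler. Then the following are equivalent: (a) every optimal solution $(\mathbf W^\star,\mathbf H^\star)$ of $\min_{\mathbf W\in\mathrm{OB}(d,K),\mathbf H\in\mathrm{OB}(d,nK)}\mathcal L_{\mathrm{HardMax}}(\mathbf W,\mathbf H)$ satisfies $\mathbf h_{k,i}^\star=\mathbf w_k^\star$ for all $i\in[n]$, $k\in[K]$; (b) $\operatorname{argmax}_{\mathbf W\in\mathrm{OB}(d,K)}\rho_{\text{one-vs-rest}}(\mathbf W)=\operatorname{argmax}_{\mathbf W\in\mathrm{OB}(d,K)}\rho_{\text{one-vs-one}}(\mathbf W)$.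
   Context: $\mathrm{OB}(d,m)$ is the set of real $d\times m$ matrices with unit-norm columns; $\mathbf W$ has columns $\mathbf w_k$, $\mathbf H$ has columns $\mathbf h_{k,i}$. $\mathcal L_{\mathrm{HardMax}}(\mathbf W,\mathbf H)=\max_k\max_i\max_{k'\ne k}\langle\mathbf w_{k'}-\mathbf w_k,\mathbf h_{k,i}\rangle$. $\operatorname{dist}(\mathbf v,\mathcal W)=\inf\{\|\mathbf v-\mathbf w\|_2:\mathbf w\in\operatorname{conv}(\mathcal W)\}$. $\rho_{\text{one-vs-rest}}(\mathbf W)=\min_k\operatorname{dist}(\mathbf w_k,\{\mathbf w_j\}_{j\ne k})$; a Softmax Code is a maximizer of it over $\mathrm{OB}(d,K)$, and a rattler of it is an index $k$ with $\operatorname{dist}(\mathbf w_k,\{\mathbf w_j\}_{j\ne k})\ne\rho_{\text{one-vs-rest}}(\mathbf W)$. $\rho_{\text{one-vs-one}}(\mathbf W)=\min_k\min_{k'\ne k}\|\mathbf w_k-\mathbf w_{k'}\|_2$; the Tammes problem is maximizing $\rho_{\text{one-vs-one}}$ over $\mathrm{OB}(d,K)$, and a rattler of a Tammes solution $\mathbf W$ is an index $k$ with $\min_{k'\ne k}\|\mathbf w_k-\mathbf w_{k'}\|_2\ne\rho_{\text{one-vs-one}}(\mathbf W)$. *)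

From HB Require Import structures.
From mathcomp Require Import all_boot all_order all_algebra.
From mathcomp Require Import classical_sets reals.
Set Implicit Arguments. Unset Strict Implicit. Unset Printing Implicit Defensive.
Import Order.TTheory GRing.Theory Num.Theory.
Local Open Scope classical_set_scope.
Local Open Scope ring_scope.

Section Defs.
Variable R : realType.

Definition dotv (d : nat) (u v : 'cV[R]_d) : R := \sum_(i < d) u i 0 * v i 0.
Definition norm2 (d : nat) (v : 'cV[R]_d) : R := Num.sqrt (dotv v v).

Definition OB (d m : nat) : set 'M[R]_(d, m) :=
  [set W | forall j : 'I_m, norm2 (col j W) = 1].

(* column h_{k,i} of H in OB(d, nK): the columns of H are indexed by pairs (k,i) *)
Definition hcol (d K n : nat) (H : 'M[R]_(d, K * n)) (k : 'I_K) (i : 'I_n) : 'cV[R]_d :=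
  col (mxvec_index k i) H.

Definition L_HardMax (d K n : nat) (W : 'M[R]_(d, K)) (H : 'M[R]_(d, K * n)) : R :=
  sup [set x | exists k : 'I_K, exists i : 'I_n, exists k' : 'I_K,
         k' != k /\ x = dotv (col k' W - col k W) (hcol H k i)].

Definition HardMax_optimal (d K n : nat) (W : 'M[R]_(d, K)) (H : 'M[R]_(d, K * n)) : Prop :=
  @OB d K W /\ @OB d (K * n) H /\
  forall (W' : 'M[R]_(d, K)) (H' : 'M[R]_(d, K * n)),
    @OB d K W' -> @OB d (K * n) H' -> L_HardMax W H <= L_HardMax W' H'.

Definition conv (d : nat) (I : finType) (P : pred I) (x : I -> 'cV[R]_d) : set 'cV[R]_d :=
  [set v | exists lam : I -> R, (forall j, P j -> 0 <= lam j) /\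
           \sum_(j | P j) lam j = 1 /\ v = \sum_(j | P j) lam j *: x j].

Definition dist_conv (d : nat) (v : 'cV[R]_d) (A : set 'cV[R]_d) : R :=
  inf [set norm2 (v - w) | w in A].

Definition dist_rest (d K : nat) (W : 'M[R]_(d, K)) (k : 'I_K) : R :=
  dist_conv (col k W) (conv (fun j : 'I_K => j != k) (fun j => col j W)).

Definition rho_ovr (d K : nat) (W : 'M[R]_(d, K)) : R :=
  inf [set dist_rest W k | k in [set: 'I_K]].

Definition nearest (d K : nat) (W : 'M[R]_(d, K)) (k : 'I_K) : R :=
  inf [set norm2 (col k W - col k' W) | k' in [set k' : 'I_K | k' != k]].

Definition rho_ovo (d K : nat) (W : 'M[R]_(d, K)) : R :=
  inf [set nearest W k | k in [set: 'I_K]].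

Definition argmax_OB (d K : nat) (f : 'M[R]_(d, K) -> R) : set 'M[R]_(d, K) :=
  [set W | @OB d K W /\ forall W', @OB d K W' -> f W' <= f W].

Definition softmax_code (d K : nat) := argmax_OB (@rho_ovr d K).
Definition tammes_solution (d K : nat) := argmax_OB (@rho_ovo d K).

Definition ovr_rattler (d K : nat) (W : 'M[R]_(d, K)) (k : 'I_K) : Prop :=
  dist_rest W k != rho_ovr W.
Definition ovo_rattler (d K : nat) (W : 'M[R]_(d, K)) (k : 'I_K) : Prop :=
  nearest W k != rho_ovo W.

End Defs.

From Pilot Require Import Defs.
From HB Require Import structures.
From mathcomp Require Import all_boot all_order all_algebra.
From mathcomp Require Import all_classical all_reals all_analysis.
From mathcomp Require Import ring lra.
Import Order.TTheory GRing.Theory Num.Theory.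
Import numFieldNormedType.Exports.
Local Open Scope classical_set_scope.
Local Open Scope ring_scope.
Set Implicit Arguments. Unset Strict Implicit. Unset Printing Implicit Defensive.

(** The distance from [w_k] to the convex hull of the other columns equals
    [max_{|h| = 1} min_{j <> k} <w_k - w_j, h>]; the maximum is attained at the unit
    vector pointing from the nearest point of the hull to [w_k], and the maximiser
    is unique when the distance is positive. Choosing every [h_{k,i}] as such a
    maximiser gives [min_H L_HardMax(W, H) = - rho_ovr(W)], so the optimal [W] are
    the Softmax Codes; and [h = w_k] has value at least [rho_ovo(W)^2 / 2], so
    [rho_ovo^2 / 2 <= rho_ovr] everywhere.
    Under (a), the maximiser for a Softmax Code is [w_k], hence
    [rho_ovr = rho_ovo^2 / 2] on Softmax Codes, which makes the argmax sets coincide.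
    Under (b), an optimal [W] is a Tammes solution. If some [h_{k,i}] had value
    above [rho_ovo^2 / 2], pushing [w_k] slightly towards [h_{k,i}] would move it
    farther than [rho_ovo] from every other column and yield a Tammes solution with
    rattler [k]. So [w_k] is a maximiser too, and uniqueness gives [h_{k,i} = w_k];
    the absence of rattlers in Softmax Codes makes the distance equal to
    [rho_ovr > 0]. *)

Section InnerProduct.
Variables (R : realType) (d : nat).
Implicit Types (u v w h : 'cV[R]_d) (c : R).

Lemma dotvC u v : dotv u v = dotv v u.
Proof. by apply: eq_bigr => i _; rewrite mulrC. Qed.

Lemma dotvDl u v w : dotv (u + v) w = dotv u w + dotv v w.
Proof. by rewrite /dotv -big_split; apply: eq_bigr => i _; rewrite mxE mulrDl. Qed.

Lemma dotvZl c u w : dotv (c *: u) w = c * dotv u w.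
Proof. by rewrite /dotv mulr_sumr; apply: eq_bigr => i _; rewrite mxE mulrA. Qed.

Lemma dotvNl u w : dotv (- u) w = - dotv u w.
Proof. by rewrite -scaleN1r dotvZl mulN1r. Qed.

Lemma dotvBl u v w : dotv (u - v) w = dotv u w - dotv v w.
Proof. by rewrite dotvDl dotvNl. Qed.

Lemma dotvDr u v w : dotv w (u + v) = dotv w u + dotv w v.
Proof. by rewrite dotvC dotvDl !(dotvC w). Qed.

Lemma dotvZr c u w : dotv w (c *: u) = c * dotv w u.
Proof. by rewrite dotvC dotvZl dotvC. Qed.

Lemma dotvBr u v w : dotv w (u - v) = dotv w u - dotv w v.
Proof. by rewrite !(dotvC w) dotvBl. Qed.

Lemma dotv0l w : dotv 0 w = 0.
Proof. by rewrite -(scale0r 0) dotvZl mul0r. Qed.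

Lemma dotv_suml (I : finType) (P : pred I) (F : I -> 'cV[R]_d) w :
  dotv (\sum_(j | P j) F j) w = \sum_(j | P j) dotv (F j) w.
Proof.
rewrite /dotv; under eq_bigr do rewrite summxE big_distrl.
by rewrite exchange_big.
Qed.

Lemma dotvvD u v : dotv (u + v) (u + v) = dotv u u + 2 * dotv u v + dotv v v.
Proof. rewrite dotvDl !dotvDr (dotvC v u); ring. Qed.

Lemma dotvvB u v : dotv (u - v) (u - v) = dotv u u - 2 * dotv u v + dotv v v.
Proof. rewrite dotvBl !dotvBr (dotvC v u); ring. Qed.

Lemma dotvvZ c u : dotv (c *: u) (c *: u) = c ^+ 2 * dotv u u.
Proof. rewrite dotvZl dotvZr; ring. Qed.

Lemma dotvvN v : dotv (- v) (- v) = dotv v v.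
Proof. by rewrite dotvNl dotvC dotvNl opprK. Qed.

Lemma dotvv_ge0 v : 0 <= dotv v v.
Proof. by rewrite sumr_ge0 // => i _; rewrite -expr2 sqr_ge0. Qed.

Lemma dotvv_eq0 v : (dotv v v == 0) = (v == 0).
Proof.
apply/idP/eqP => [|->]; last by rewrite dotv0l.
rewrite psumr_eq0 => [/allP v0|i _]; last by rewrite -expr2 sqr_ge0.
apply/matrixP => i j; rewrite ord1 mxE.
by have /implyP/(_ isT) := v0 i (mem_index_enum _); rewrite mulf_eq0 orbb => /eqP.
Qed.

Lemma dotvv_ge_sqr v i : v i 0 ^+ 2 <= dotv v v.
Proof.
rewrite /dotv (bigD1 i) //= -expr2 lerDl.
by apply: sumr_ge0 => j _; rewrite -expr2 sqr_ge0.
Qed.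

Lemma dotvv_delta (i : 'I_d) : dotv (delta_mx i 0 : 'cV[R]_d) (delta_mx i 0) = 1.
Proof.
rewrite /dotv (bigD1 i) //= big1 ?addr0 => [|j ji]; first by rewrite !mxE !eqxx mulr1.
by rewrite !mxE (negbTE ji) mul0r.
Qed.

Lemma norm2_ge0 v : 0 <= norm2 v.
Proof. exact: sqrtr_ge0. Qed.

Lemma sqr_norm2 v : norm2 v ^+ 2 = dotv v v.
Proof. by rewrite sqr_sqrtr // dotvv_ge0. Qed.

Lemma norm2_gt0 v : (0 < norm2 v) = (v != 0).
Proof. by rewrite sqrtr_gt0 lt_def dotvv_ge0 dotvv_eq0 andbT. Qed.

Lemma norm2_eq1 v : norm2 v = 1 <-> dotv v v = 1.
Proof. by split=> [h|h]; [rewrite -sqr_norm2 h expr1n | rewrite /norm2 h sqrtr1]. Qed.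

Lemma ler_norm2 v c : 0 <= c -> (c <= norm2 v) = (c ^+ 2 <= dotv v v).
Proof. by move=> c0; rewrite -sqr_norm2 ler_pXn2r // nnegrE norm2_ge0. Qed.

Lemma ltr_norm2 v c : 0 <= c -> (c < norm2 v) = (c ^+ 2 < dotv v v).
Proof. by move=> c0; rewrite -sqr_norm2 ltr_pXn2r // nnegrE norm2_ge0. Qed.

Lemma norm2_ler v c : 0 <= c -> (norm2 v <= c) = (dotv v v <= c ^+ 2).
Proof. by move=> c0; rewrite -sqr_norm2 ler_pXn2r // nnegrE norm2_ge0. Qed.

Lemma norm2_distC u v : norm2 (u - v) = norm2 (v - u).
Proof. by rewrite /norm2 -opprB dotvvN. Qed.

Lemma normalize_unit v : v != 0 ->
  dotv ((norm2 v)^-1 *: v) ((norm2 v)^-1 *: v) = 1.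
Proof.
by rewrite -norm2_gt0 => v0; rewrite dotvvZ -sqr_norm2 exprVn mulVf // expf_neq0 // gt_eqF.
Qed.

Lemma dotv_le_norm2 u h : dotv h h = 1 -> dotv u h <= norm2 u.
Proof.
move=> h1; have : 0 <= dotv (u - dotv u h *: h) (u - dotv u h *: h) by exact: dotvv_ge0.
rewrite dotvvB dotvvZ dotvZr h1 => uh.
by rewrite (le_trans (ler_norm _)) // ler_norm2 ?normr_ge0 // real_normK ?num_real //; lra.
Qed.

Section UnitVectors.
Variables u v : 'cV[R]_d.
Hypotheses (u1 : dotv u u = 1) (v1 : dotv v v = 1).

Lemma dotvvB_unit : dotv (u - v) (u - v) = 2 - 2 * dotv u v.
Proof. rewrite dotvvB u1 v1; ring. Qed.

Lemma dotv_unit_le1 : dotv u v <= 1.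
Proof. by have := dotvv_ge0 (u - v); rewrite dotvvB_unit; lra. Qed.

Lemma dotv_unit_geN1 : -1 <= dotv u v.
Proof. by have := dotvv_ge0 (u + v); rewrite dotvvD u1 v1; lra. Qed.

Lemma dotvB_unit_self : dotv (u - v) u = dotv (u - v) (u - v) / 2.
Proof. by rewrite dotvvB_unit dotvBl u1 (dotvC v); field. Qed.

End UnitVectors.

End InnerProduct.

Section FiniteInf.
Variables (R : realType) (I : finType) (A : set I) (f : I -> R).

Lemma inf_image_finite : A !=set0 ->
  exists2 i, A i & inf (f @` A) = f i /\ forall j, A j -> f i <= f j.
Proof.
case=> i0 Ai0; have Pi0 : `[< A i0 >] by apply/asboolP.
have [k /asboolP Ak kmin] := @arg_minP _ _ I i0 (fun i => `[< A i >]) f Pi0.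
have {}kmin j : A j -> f k <= f j by move=> Aj; apply/kmin/asboolP.
exists k => //; split => //; apply/eqP; rewrite eq_le; apply/andP; split.
- by apply: ge_inf; [exists (f k) => _ [j Aj <-]; exact: kmin | exists k].
- by apply: lb_le_inf; [exists (f k), k | move=> _ [j Aj <-]; exact: kmin].
Qed.

Lemma inf_image_le i : A i -> inf (f @` A) <= f i.
Proof. by move=> Ai; have [k _ [-> kmin]] := inf_image_finite (ex_intro _ i Ai); exact: kmin. Qed.

End FiniteInf.

Section ConvexHull.
Variables (R : realType) (d : nat) (I : finType) (P : pred I) (x : I -> 'cV[R]_d).
Local Notation C := (Defs.conv P x).

Lemma conv_gen j : P j -> C (x j).
Proof.
move=> Pj; exists (fun i => (i == j)%:R); split; first by move=> i _; rewrite ler0n.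
split; rewrite (bigD1 j) //= eqxx ?scale1r big1 ?addr0 // => i /andP[_ /negbTE ->] //.
by rewrite scale0r.
Qed.

Lemma conv_segment y z t : C y -> C z -> 0 <= t <= 1 -> C (y + t *: (z - y)).
Proof.
move=> [l1 [l1_ge0 [l1_sum ->]]] [l2 [l2_ge0 [l2_sum ->]]] /andP[t0 t1].
exists (fun i => (1 - t) * l1 i + t * l2 i); split.
  by move=> i Pi; rewrite addr_ge0 // mulr_ge0 ?subr_ge0 ?l1_ge0 ?l2_ge0.
split; first by rewrite big_split /= -!mulr_sumr l1_sum l2_sum; ring.
under [RHS]eq_bigr do rewrite scalerDl -!scalerA.
by rewrite big_split /= -!scaler_sumr scalerBl scale1r scalerBr addrCA addrC.
Qed.

Lemma dist_conv_le v y : C y -> dist_conv v C <= norm2 (v - y).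
Proof.
by move=> Cy; apply: ge_inf; [exists 0 => _ [z _ <-]; exact: norm2_ge0 | exists y].
Qed.

Lemma dist_conv_ge v c : C !=set0 ->
  (forall y, C y -> c <= norm2 (v - y)) -> c <= dist_conv v C.
Proof.
move=> [y Cy] cle; apply: lb_le_inf; first by exists (norm2 (v - y)), y.
by move=> _ [z Cz <-]; exact: cle.
Qed.

Lemma dist_conv_ge_dual v h m : (exists j, P j) -> dotv h h = 1 ->
  (forall j, P j -> m <= dotv (v - x j) h) -> m <= dist_conv v C.
Proof.
move=> [j Pj] h1 mle; apply: dist_conv_ge; first by exists (x j); exact: conv_gen.
move=> _ [l [l_ge0 [l_sum ->]]]; apply: le_trans (dotv_le_norm2 _ h1).
have -> : v - \sum_(i | P i) l i *: x i = \sum_(i | P i) l i *: (v - x i).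
  rewrite -[v in LHS]scale1r -l_sum scaler_suml -sumrB.
  by apply: eq_bigr => i _; rewrite scalerBr.
rewrite dotv_suml -[m]mul1r -l_sum mulr_suml.
by apply: ler_sum => i Pi; rewrite dotvZl ler_wpM2l ?l_ge0 ?mle.
Qed.

Lemma nearest_conv_obtuse v y z : C y -> dist_conv v C = norm2 (v - y) -> C z ->
  dotv (v - y) (z - y) <= 0.
Proof.
move=> Cy ydist Cz; set a := v - y; set b := z - y.
have step t : 0 < t <= 1 -> 2 * dotv a b <= t * dotv b b.
  move=> /andP[t0 t1]; have := dist_conv_le v (conv_segment Cy Cz (t := t) _).
  rewrite ltW //= => /(_ t1); rewrite ydist opprD addrA -/a -/b.
  rewrite ler_norm2 ?norm2_ge0 // sqr_norm2 [leRHS]dotvvB dotvvZ dotvZr => le.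
  by rewrite -(ler_pM2l t0) [leRHS]mulrA -expr2; lra.
rewrite leNgt; apply/negP => ab0; set M := dotv b b in step *.
have M0 : 0 <= M := dotvv_ge0 b.
have pM : 0 < dotv a b + M by lra.
have t01 : 0 < dotv a b / (dotv a b + M) <= 1.
  by rewrite divr_gt0 //= ler_pdivrMr // mul1r; lra.
have : dotv a b / (dotv a b + M) * M <= dotv a b.
  by rewrite mulrAC ler_pdivrMr // ler_pM2l //; lra.
by have := step _ t01; lra.
Qed.

Lemma dist_conv_dual v y : C y -> dist_conv v C = norm2 (v - y) ->
  0 < dist_conv v C ->
  exists h, dotv h h = 1 /\ forall j, P j -> dist_conv v C <= dotv (v - x j) h.
Proof.
move=> Cy ydist; rewrite ydist => a_gt0.
exists ((norm2 (v - y))^-1 *: (v - y)); split; first by rewrite normalize_unit // -norm2_gt0.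
move=> j Pj; rewrite dotvZr ler_pdivlMl // -expr2 sqr_norm2.
have := nearest_conv_obtuse Cy ydist (conv_gen Pj).
have -> : v - x j = (v - y) - (x j - y) by rewrite opprB addrA subrK.
by rewrite (dotvBl (v - y)) (dotvC (x j - y)); lra.
Qed.

End ConvexHull.

Section Topology.
Variable R : realType.

Lemma bounded_entries_compact m n (A : set 'M[R]_(m, n)) c :
  (forall M, A M -> forall i j, `|M i j| <= c) -> closed A -> compact A.
Proof.
move=> Ac Acl.
have vec_mx_cont : continuous (@vec_mx R m n).
  move=> M B /nbhs_ballP[e e0 MeB]; apply/nbhs_ballP; exists e => // N [_ MN].
  by apply: MeB; split => // i j; rewrite !mxE; exact: MN.
have cB : compact (vec_mx @^-1` A).
  apply: bounded_closed_compact; last first.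
    by apply: preimage_closed => // M _; exact: vec_mx_cont.
  exists `|c|; split; first exact: num_real.
  move=> r cr M /= AM; rewrite /Num.norm /= mx_normrE.
  apply: bigmax_le => [|[i j] _ /=]; first exact: le_trans (ltW cr).
  rewrite (ord1 i); case/mxvec_indexP: j => a b.
  have := Ac _ AM a b; rewrite mxE => Mab_le.
  by rewrite (le_trans Mab_le) // (le_trans (ler_norm c)) // ltW.
have -> : A = vec_mx @` (vec_mx @^-1` A).
  by apply/seteqP; split => [M AM | _ [M AM <-] //]; exists (mxvec M); rewrite /= mxvecK.
exact: continuous_compact (continuous_subspaceT vec_mx_cont) cB.
Qed.

(* A cluster point of the sets [A `&` [set y | r < f y]], [r < sup (f @` A)], is a
   maximiser. *)
Lemma compact_usc_max (T : topologicalType) (A : set T) (f : T -> R) c :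
  compact A -> A !=set0 -> (forall x, A x -> f x <= c) ->
  (forall x r, f x < r -> nbhs x [set y | f y < r]) ->
  exists2 x, A x & forall y, A y -> f y <= f x.
Proof.
move=> cA [x0 Ax0] fc usc; set s := sup (f @` A).
have hs : has_sup (f @` A).
  by split; [exists (f x0), x0 | exists c => _ [y Ay <-]; exact: fc].
pose F := filter_from [set r | r < s] (fun r => A `&` [set y | r < f y]).
have FF : ProperFilter F.
  apply: filter_from_proper.
    apply: filter_from_filter; first by exists (s - 1); rewrite /= ltrBlDr ltrDl.
    move=> r1 r2 r1s r2s; exists (Num.max r1 r2); first by rewrite /= gt_max r1s r2s.
    by move=> y [Ay]; rewrite /= gt_max => /andP[].
  move=> r rs; have sr : 0 < s - r by rewrite subr_gt0.
  have [_ [y Ay <-] ry] := sup_adherent sr hs.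
  by exists y; split => //=; move: ry; rewrite opprB addrCA subrr addr0.
have FA : F A by exists (s - 1); [rewrite /= ltrBlDr ltrDl | move=> y []].
have [x [Ax clx]] := cA F FF FA.
exists x => // y Ay; apply: le_trans (_ : s <= f x).
  by apply: sup_upper_bound => //; exists y.
rewrite leNgt; apply/negP => fxs; pose r := (f x + s) / 2.
have FAr : F (A `&` [set y | r < f y]) by exists r => //=; rewrite /r; lra.
have [z [[_ rz] zr]] := clx _ _ FAr (usc x r ltac:(rewrite /r; lra)).
by rewrite /= in zr rz; lra.
Qed.

Lemma continuous_col m n j : continuous (fun M : 'M[R]_(m, n) => col j M).
Proof.
move=> M B /nbhs_ballP[e e0 MeB]; apply/nbhs_ballP; exists e => // N [_ MN].
by apply: MeB; split => // i k; rewrite !mxE; exact: MN.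
Qed.

Lemma continuous_norm2 d : continuous (@norm2 R d).
Proof.
move=> v; apply: continuous_comp; last exact: sqrt_continuous.
apply: (continuous_big add_continuous) => i _ u.
by apply: continuousM; exact: coord_continuous.
Qed.

End Topology.

Section ConvexHullCompact.
Variables (R : realType) (d K : nat) (P : pred 'I_K) (x : 'I_K -> 'cV[R]_d).
Local Notation C := (Defs.conv P x).

Lemma conv_compact : compact C.
Proof.
pose S := [set l : 'rV[R]_K | (forall j, l 0 j \in `[0, 1]) /\ \sum_(j | P j) l 0 j = 1].
have -> : C = (fun l => \sum_(j | P j) l 0 j *: x j) @` S.
  apply/seteqP; split => [_ [lam [lam_ge0 [lam_sum ->]]] | _ [l [l01 l_sum] <-]].
    exists (\row_j (if P j then lam j else 0)); last first.
      by apply: eq_bigr => j Pj; rewrite mxE Pj.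
    split; last by rewrite -lam_sum; apply: eq_bigr => j Pj; rewrite mxE Pj.
    move=> j; rewrite mxE in_itv /=; case: ifP => Pj; last by rewrite lexx ler01.
    rewrite lam_ge0 //= -lam_sum (bigD1 j) //= lerDl.
    by apply: sumr_ge0 => i /andP[Pi _]; exact: lam_ge0.
  exists (fun j => l 0 j); split => // j _.
  by have := l01 j; rewrite in_itv /= => /andP[].
apply: continuous_compact.
  apply: continuous_subspaceT => l; apply: (continuous_big add_continuous) => j _ l'.
  by apply: continuousZr_tmp; exact: coord_continuous.
apply: (@bounded_entries_compact _ _ _ _ 1).
  move=> l [l01 _] i j; rewrite (ord1 i).
  by have := l01 j; rewrite in_itv /= => /andP[l0 l1]; rewrite ger0_norm.
have -> : S = \bigcap_(j in [set: 'I_K]) ((fun l : 'rV[R]_K => l 0 j) @^-1` `[0, 1])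
            `&` (fun l => \sum_(j | P j) l 0 j) @^-1` [set 1].
  by apply/seteqP; split => l [l01 ls]; split => // j; [move=> _; exact: l01 | exact: l01].
apply: closedI.
  apply: closed_bigI => j _; apply: preimage_closed; last exact: interval_closed.
  by move=> l _; exact: coord_continuous.
apply: preimage_closed; last exact: closed_eq.
by move=> l _; apply: (continuous_big add_continuous) => j _ l'; exact: coord_continuous.
Qed.

Lemma dist_conv_attained v : (exists j, P j) ->
  exists2 y, C y & dist_conv v C = norm2 (v - y).
Proof.
move=> [j Pj]; have C0 : C !=set0 by exists (x j); exact: conv_gen.
have [|y /set_mem Cy ymin] :=
  compact_EVT_min (f := fun y : 'cV[R]_d => norm2 (v - y)) C0 conv_compact.
  apply: continuous_subspaceT => y; apply: continuous_comp; last exact: continuous_norm2.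
  by apply: continuousB; [exact: cst_continuous | exact: cvg_id].
exists y => //; apply/eqP; rewrite eq_le dist_conv_le //=.
by apply: dist_conv_ge => // z Cz; apply/ymin/mem_set.
Qed.

End ConvexHullCompact.

Section Columns.
Variables (R : realType) (d : nat).

Definition mx_of_cols m (f : 'I_m -> 'cV[R]_d) : 'M[R]_(d, m) := \matrix_(i, j) f j i 0.

Lemma col_mx_of_cols m (f : 'I_m -> 'cV[R]_d) j : col j (mx_of_cols f) = f j.
Proof. by apply/matrixP => i c; rewrite ord1 !mxE. Qed.

Lemma OB_col m (W : 'M[R]_(d, m)) j : OB W -> dotv (col j W) (col j W) = 1.
Proof. by move=> W1; apply/norm2_eq1/W1. Qed.

Lemma mx_of_cols_OB m (f : 'I_m -> 'cV[R]_d) :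
  (forall j, dotv (f j) (f j) = 1) -> OB (mx_of_cols f).
Proof. by move=> f1 j; rewrite col_mx_of_cols; apply/norm2_eq1. Qed.

End Columns.

Section OneVsRestOneVsOne.
Variables (R : realType) (d K : nat).
Hypothesis K2 : (2 <= K)%N.
Implicit Types (W : 'M[R]_(d, K)) (k j : 'I_K) (h : 'cV[R]_d).

Lemma exists_neq k : exists j, j != k.
Proof.
have [k0|k0] := eqVneq (k : nat) 0%N.
  by exists (Ordinal K2); apply/eqP => /(congr1 val) /=; rewrite k0.
by exists (Ordinal (ltnW K2)); apply/eqP => /(congr1 val) /= k0'; rewrite -k0' in k0.
Qed.

Lemma rest_neq0 W k : Defs.conv (fun j => j != k) (fun j => col j W) !=set0.
Proof. by have [j jk] := exists_neq k; exists (col j W); exact: conv_gen. Qed.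

Lemma dist_rest_ge0 W k : 0 <= dist_rest W k.
Proof. by apply: dist_conv_ge (rest_neq0 W k) _ => y _; exact: norm2_ge0. Qed.

Lemma dist_rest_le W k j : j != k -> dist_rest W k <= norm2 (col k W - col j W).
Proof. by move=> jk; apply: dist_conv_le; exact: conv_gen. Qed.

Lemma dist_rest_ge_dual W k h s : dotv h h = 1 ->
  (forall j, j != k -> s <= dotv (col k W - col j W) h) -> s <= dist_rest W k.
Proof. exact: dist_conv_ge_dual (exists_neq k). Qed.

Lemma dotvB_col_self W k j : OB W ->
  dotv (col k W - col j W) (col k W) = norm2 (col k W - col j W) ^+ 2 / 2.
Proof. by move=> W1; rewrite sqr_norm2 dotvB_unit_self // OB_col. Qed.

Lemma dist_rest_dual W k : OB W -> exists h, dotv h h = 1 /\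
  forall j, j != k -> dist_rest W k <= dotv (col k W - col j W) h.
Proof.
move=> W1; have [y Cy ydist] :=
  dist_conv_attained (fun j => col j W) (col k W) (exists_neq k).
have [dist_gt0|dist_le0] := ltrP 0 (dist_rest W k).
  exact: dist_conv_dual Cy ydist dist_gt0.
exists (col k W); split=> [|j jk]; first exact: OB_col.
by rewrite dotvB_col_self // (le_trans dist_le0) // divr_ge0 ?sqr_ge0.
Qed.

Lemma rho_ovr_le W k : rho_ovr W <= dist_rest W k.
Proof. exact: inf_image_le. Qed.

Lemma rho_ovr_attained W : exists k, rho_ovr W = dist_rest W k.
Proof.
have [|k _ [Ek _]] := @inf_image_finite _ _ [set: 'I_K] (dist_rest W).
  by exists (Ordinal (ltnW K2)).
by exists k.
Qed.

Lemma rho_ovr_ge0 W : 0 <= rho_ovr W.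
Proof. by have [k ->] := rho_ovr_attained W; exact: dist_rest_ge0. Qed.

Lemma nearest_attained W k :
  exists2 j, j != k & nearest W k = norm2 (col k W - col j W).
Proof.
have [j jk [Ej _]] := inf_image_finite (fun j => norm2 (col k W - col j W)) (exists_neq k).
by exists j.
Qed.

Lemma rho_ovo_le W k j : j != k -> rho_ovo W <= norm2 (col k W - col j W).
Proof.
move=> jk; apply: le_trans (inf_image_le _ (I : [set: 'I_K] k)) _.
exact: (@inf_image_le _ _ [set j | j != k]).
Qed.

Lemma rho_ovo_attained W :
  exists k, exists2 j, j != k & rho_ovo W = norm2 (col k W - col j W).
Proof.
have [|k _ [Ek _]] := @inf_image_finite _ _ [set: 'I_K] (nearest W).
  by exists (Ordinal (ltnW K2)).
by have [j jk Ej] := nearest_attained W k; exists k, j; rewrite // /rho_ovo Ek.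
Qed.

Lemma rho_ovo_ge W c :
  (forall k j, j != k -> c <= norm2 (col k W - col j W)) -> c <= rho_ovo W.
Proof. by have [k [j jk ->]] := rho_ovo_attained W; apply. Qed.

Lemma rho_ovo_ge0 W : 0 <= rho_ovo W.
Proof. by apply: rho_ovo_ge => *; exact: norm2_ge0. Qed.

Lemma sqr_rho_ovo_le_dotvB W k j : OB W -> j != k ->
  rho_ovo W ^+ 2 / 2 <= dotv (col k W - col j W) (col k W).
Proof.
move=> W1 jk; rewrite dotvB_col_self // ler_pM2r // ler_pXn2r ?nnegrE ?norm2_ge0 //.
  exact: rho_ovo_le.
exact: rho_ovo_ge0.
Qed.

Lemma sqr_rho_ovo_le_rho_ovr W : OB W -> rho_ovo W ^+ 2 / 2 <= rho_ovr W.
Proof.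
move=> W1; have [k ->] := rho_ovr_attained W.
by apply: (dist_rest_ge_dual (OB_col k W1)) => j; exact: sqr_rho_ovo_le_dotvB.
Qed.

Lemma rho_ovr_le_sqr_rho_ovo W : OB W ->
  (forall k j, j != k -> rho_ovr W <= dotv (col k W - col j W) (col k W)) ->
  rho_ovr W <= rho_ovo W ^+ 2 / 2.
Proof.
move=> W1 self_dual; have [k [j jk ->]] := rho_ovo_attained W.
by rewrite -dotvB_col_self //; exact: self_dual.
Qed.

Lemma dist_rest_dual_uniq W k h1 h2 : 0 < dist_rest W k ->
  dotv h1 h1 = 1 -> dotv h2 h2 = 1 ->
  (forall j, j != k -> dist_rest W k <= dotv (col k W - col j W) h1) ->
  (forall j, j != k -> dist_rest W k <= dotv (col k W - col j W) h2) ->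
  h1 = h2.
Proof.
set s := dist_rest W k => s0 h11 h21 sep1 sep2; apply/eqP/negPn/negP => h12.
set m := 2^-1 *: (h1 + h2).
have sepm j : j != k -> s <= dotv (col k W - col j W) m.
  by move=> jk; rewrite dotvZr dotvDr; have := sep1 j jk; have := sep2 j jk; lra.
have m_neq0 : m != 0.
  apply/eqP => m0; have [j jk] := exists_neq k.
  by have := sepm j jk; rewrite m0 dotvC dotv0l; lra.
have m_lt1 : norm2 m < 1.
  have : 0 < dotv (h1 - h2) (h1 - h2) by rewrite lt_def dotvv_ge0 dotvv_eq0 subr_eq0 h12.
  rewrite dotvvB_unit // => h12_gt0.
  by rewrite ltNge ler_norm2 // expr1n -ltNge dotvvZ dotvvD h11 h21; lra.
have m_gt0 : 0 < norm2 m by rewrite norm2_gt0.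
have : s / norm2 m <= s.
  apply: (dist_rest_ge_dual (normalize_unit m_neq0)) => j jk.
  by rewrite dotvZr [_ / _]mulrC ler_pM2l ?invr_gt0 // sepm.
by rewrite ler_pdivrMr // ler_pMr // leNgt m_lt1.
Qed.

End OneVsRestOneVsOne.

Section HardMax.
Variables (R : realType) (d K n : nat).
Hypotheses (K2 : (2 <= K)%N) (n0 : (0 < n)%N).
Implicit Types (W : 'M[R]_(d, K)) (H : 'M[R]_(d, K * n)).

Lemma L_HardMax_ge W H k i j : j != k ->
  dotv (col j W - col k W) (hcol H k i) <= L_HardMax W H.
Proof.
move=> jk; apply: ub_le_sup; last by exists k, i, j.
pose g (t : 'I_K * 'I_n * 'I_K) := dotv (col t.2 W - col t.1.1 W) (hcol H t.1.1 t.1.2).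
exists (\sum_t `|g t|) => _ [k' [i' [j' [_ ->]]]].
rewrite (bigD1 (k', i', j')) //= (le_trans (ler_norm _)) // lerDl.
by apply: sumr_ge0 => *; exact: normr_ge0.
Qed.

Lemma L_HardMax_leP W H s : L_HardMax W H <= - s <->
  forall k i j, j != k -> s <= dotv (col k W - col j W) (hcol H k i).
Proof.
have dotvBC k j h : dotv (col j W - col k W) h = - dotv (col k W - col j W) h.
  by rewrite -dotvNl opprB.
split=> [L_le k i j jk | sep].
  by rewrite -lerN2 -dotvBC (le_trans _ L_le) // L_HardMax_ge.
have [j jk] := exists_neq K2 (Ordinal (ltnW K2)).
apply: ge_sup; first by eexists; exists (Ordinal (ltnW K2)), (Ordinal n0), j.
by move=> _ [k [i [{}j [{}jk ->]]]]; rewrite dotvBC lerN2 sep.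
Qed.

Lemma L_HardMax_ge_rho W H : OB H -> - rho_ovr W <= L_HardMax W H.
Proof.
move=> H1; have [k ->] := rho_ovr_attained K2 W; rewrite lerNl.
apply: (dist_rest_ge_dual K2 (OB_col (mxvec_index k (Ordinal n0)) H1)) => j jk.
by rewrite lerNl -dotvNl opprB; exact: L_HardMax_ge.
Qed.

Definition collapsed (f : 'I_K -> 'cV[R]_d) : 'M[R]_(d, K * n) :=
  \matrix_(r, c) mxvec (\matrix_(k < K, i < n) f k r 0) 0 c.

Lemma hcol_collapsed f k i : hcol (collapsed f) k i = f k.
Proof. by apply/matrixP => r c; rewrite ord1 !mxE mxvecE mxE. Qed.

Lemma collapsed_OB f : (forall k, dotv (f k) (f k) = 1) -> OB (collapsed f).
Proof.
move=> f1 c; case/mxvec_indexP: c => k i.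
by have := hcol_collapsed f k i; rewrite /hcol => ->; apply/norm2_eq1.
Qed.

Lemma exists_L_HardMax_le W : OB W ->
  exists2 H : 'M[R]_(d, K * n), OB H & L_HardMax W H <= - rho_ovr W.
Proof.
move=> W1; have [f f_dual] := choice (fun k => dist_rest_dual K2 k W1).
exists (collapsed f); first by apply: collapsed_OB => k; have [] := f_dual k.
apply/L_HardMax_leP => k i j jk; rewrite hcol_collapsed (le_trans (rho_ovr_le W k)) //.
by have [_] := f_dual k; apply.
Qed.

Lemma HardMax_optimal_softmax W H : HardMax_optimal W H -> softmax_code W /\
  forall k i j, j != k -> rho_ovr W <= dotv (col k W - col j W) (hcol H k i).
Proof.
move=> [W1 [H1 opt]].
have L_le W' : OB W' -> L_HardMax W H <= - rho_ovr W'.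
  move=> W'1; have [H' H'1 L'_le] := exists_L_HardMax_le W'1.
  exact: le_trans (opt _ _ W'1 H'1) L'_le.
split; last exact/L_HardMax_leP/L_le.
by split=> // W' W'1; rewrite -lerN2; apply: le_trans (L_HardMax_ge_rho W H1) (L_le W' W'1).
Qed.

Lemma softmax_HardMax_optimal W H : softmax_code W -> OB H ->
  L_HardMax W H <= - rho_ovr W -> HardMax_optimal W H.
Proof.
move=> [W1 Wmax] H1 L_le; split=> //; split=> // W' H' W'1 H'1.
by apply: (le_trans L_le); rewrite (le_trans _ (L_HardMax_ge_rho W' H'1)) // lerN2 Wmax.
Qed.

Lemma softmax_rho_ovr_le W :
  (forall W' H, HardMax_optimal W' H -> forall k i, hcol H k i = col k W') ->
  softmax_code W -> rho_ovr W <= rho_ovo W ^+ 2 / 2.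
Proof.
move=> collapse W_sm; have [H H1 L_le] := exists_L_HardMax_le W_sm.1.
have opt := softmax_HardMax_optimal W_sm H1 L_le.
apply: (rho_ovr_le_sqr_rho_ovo K2 W_sm.1) => k j jk.
rewrite -[X in dotv _ X](collapse W H opt k (Ordinal n0)).
exact: (L_HardMax_leP W H (rho_ovr W)).1 L_le k (Ordinal n0) j jk.
Qed.

End HardMax.

Section PushTowards.
Variables (R : realType) (d : nat) (w h : 'cV[R]_d).
Hypotheses (w1 : dotv w w = 1) (h1 : dotv h h = 1).

Let sqr_dotv_le1 : dotv w h ^+ 2 <= 1.
Proof.
have := dotv_unit_le1 w1 h1; have := dotv_unit_geN1 w1 h1.
move=> ge le; have : 0 <= (1 - dotv w h) * (dotv w h + 1) by rewrite mulr_ge0 //; lra.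
by lra.
Qed.

Lemma norm2_addZ_ge t : 1 + t * dotv w h <= norm2 (w + t *: h).
Proof.
have [neg|pos] := lerP (1 + t * dotv w h) 0; first exact: le_trans neg (norm2_ge0 _).
rewrite ler_norm2 ?(ltW pos) // dotvvD dotvvZ dotvZr w1 h1.
have : 0 <= t ^+ 2 * (1 - dotv w h ^+ 2) by rewrite mulr_ge0 ?sqr_ge0 // subr_ge0.
by lra.
Qed.

Lemma norm2_addZ_le t : norm2 (w + t *: h) <= 1 + t * dotv w h + t ^+ 2 / 2.
Proof.
have := sqr_ge0 (t + dotv w h); have := sqr_dotv_le1 => c2 tc2.
rewrite norm2_ler; last by lra.
rewrite dotvvD dotvvZ dotvZr w1 h1.
by have := mulr_ge0 (sqr_ge0 t) (sqr_ge0 (dotv w h + t / 2)); lra.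
Qed.

Lemma scaled_norm2_addZ_ge a t :
  a * (1 + t * dotv w h) - `|a| * (t ^+ 2 / 2) <= a * norm2 (w + t *: h).
Proof.
have [a0|a0] := leP 0 a.
  rewrite ger0_norm //; have := ler_wpM2l a0 (norm2_addZ_ge t).
  have : 0 <= a * (t ^+ 2 / 2) by rewrite mulr_ge0 // divr_ge0 ?sqr_ge0.
  by lra.
by rewrite ltr0_norm //; have := ler_wnM2l (ltW a0) (norm2_addZ_le t); lra.
Qed.

Lemma exists_push_gain a s : dotv w h * (1 - a) < s ->
  exists2 t, 0 < t & a + t * (dotv w h - s) < a * norm2 (w + t *: h).
Proof.
(* With [g := s - dotv w h * (1 - a)], this [t] makes the quadratic loss
   [`|a| * (t ^+ 2 / 2)] smaller than the linear gain [t * g]. *)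
rewrite -subr_gt0 => g0; have a1 : 0 < `|a| + 1 by have := normr_ge0 a; lra.
set t := (s - dotv w h * (1 - a)) / (`|a| + 1); have t0 : 0 < t by rewrite divr_gt0.
have tg : t * (t * (`|a| + 1)) = t * (s - dotv w h * (1 - a)).
  by rewrite /t divfK ?gt_eqF.
exists t => //; apply: lt_le_trans (scaled_norm2_addZ_ge a t).
by have := mulr_gt0 t0 g0; have := mulr_gt0 t0 t0; lra.
Qed.

End PushTowards.

Section Rattlers.
Variables (R : realType) (d K : nat).
Hypothesis K2 : (2 <= K)%N.
Implicit Types (W : 'M[R]_(d, K)) (k j : 'I_K) (h : 'cV[R]_d).

Lemma tammes_push W k h s : OB W -> dotv h h = 1 -> rho_ovo W ^+ 2 / 2 < s ->
  (forall j, j != k -> s <= dotv (col k W - col j W) h) ->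
  exists v, dotv v v = 1 /\ forall j, j != k -> rho_ovo W < norm2 (v - col j W).
Proof.
move=> W1 h1 Ts sep; set T := rho_ovo W in Ts *.
have wk1 := OB_col k W1.
have gain : dotv (col k W) h * (1 - (1 - T ^+ 2 / 2)) < s.
  rewrite opprB addrC subrK.
  by rewrite (le_lt_trans _ Ts) // ler_piMl ?divr_ge0 ?sqr_ge0 // dotv_unit_le1.
have [t t0 t_gain] := exists_push_gain wk1 h1 gain.
set u := col k W + t *: h.
have u_lt j : j != k -> dotv u (col j W) < (1 - T ^+ 2 / 2) * norm2 u.
  move=> jk; apply: le_lt_trans t_gain.
  have := sqr_rho_ovo_le_dotvB K2 W1 jk; rewrite dotvBl wk1 (dotvC (col j W)) -/T => wkj.
  have := sep j jk; rewrite dotvBl (dotvC (col j W)) => hj.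
  have : t * dotv h (col j W) <= t * (dotv (col k W) h - s).
    by rewrite ler_wpM2l ?(ltW t0) //; lra.
  by rewrite dotvDl dotvZl; lra.
have u_neq0 : u != 0.
  apply/eqP => u0; have [j jk] := exists_neq K2 k; have := u_lt j jk.
  by rewrite u0 dotv0l /norm2 dotv0l sqrtr0 mulr0 ltxx.
exists ((norm2 u)^-1 *: u); split=> [|j jk]; first exact: normalize_unit.
rewrite ltr_norm2 ?rho_ovo_ge0 // dotvvB_unit ?normalize_unit ?OB_col // dotvZl.
have : (norm2 u)^-1 * dotv u (col j W) < 1 - T ^+ 2 / 2.
  by rewrite ltr_pdivrMl ?norm2_gt0 // mulrC u_lt.
by lra.
Qed.

Lemma tammes_separation_le W k h s : tammes_solution W ->
  (forall W', tammes_solution W' -> forall k, ~ ovo_rattler W' k) ->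
  dotv h h = 1 -> (forall j, j != k -> s <= dotv (col k W - col j W) h) ->
  s <= rho_ovo W ^+ 2 / 2.
Proof.
move=> [W1 Wmax] no_rattler h1 sep; rewrite leNgt; apply/negP => Ts.
have [v [v1 v_far]] := tammes_push W1 h1 Ts sep.
pose W' := mx_of_cols (fun j => if j == k then v else col j W).
have colW' j : col j W' = if j == k then v else col j W by exact: col_mx_of_cols.
have W'1 : OB W'.
  by apply: mx_of_cols_OB => j; case: ifP => _; [exact: v1 | exact: OB_col].
have W'_ge : rho_ovo W <= rho_ovo W'.
  apply: (rho_ovo_ge K2) => k1 k2 k21; rewrite !colW'.
  case: (k1 =P k) => [k1E|/eqP k1k]; first by subst k1; rewrite (negbTE k21) ltW ?v_far.
  case: (k2 =P k) => [k2E|_]; first by subst k2; rewrite norm2_distC ltW ?v_far.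
  exact: rho_ovo_le.
have W'_tammes : tammes_solution W'.
  by split=> // W'' W''1; exact: le_trans (Wmax _ W''1) W'_ge.
have : nearest W' k = rho_ovo W' by apply/eqP/negPn/negP; exact: no_rattler.
have [j jk ->] := nearest_attained K2 W' k; rewrite !colW' eqxx (negbTE jk) => far_eq.
by have := v_far j jk; rewrite far_eq ltNge Wmax.
Qed.

Lemma softmax_rho_ovr_gt0 W : (0 < d)%N ->
  (forall W', softmax_code W' -> forall k, ~ ovr_rattler W' k) ->
  softmax_code W -> 0 < rho_ovr W.
Proof.
(* If the optimal value were [0], every [W0] in [OB] would be a Softmax Code,
   including one whose column [k] is at distance [2] from all the others. *)
move=> d0 no_rattler [W1 Wmax]; rewrite ltNge; apply/negP => S_le0.
set e : 'cV[R]_d := delta_mx (Ordinal d0) 0; set k : 'I_K := Ordinal (ltnW K2).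
pose W0 := mx_of_cols (fun j => if j == k then e else - e).
have W01 : OB W0.
  by apply: mx_of_cols_OB => j; case: ifP => _; rewrite ?dotvvN dotvv_delta.
have W0_softmax : softmax_code W0.
  split=> // W' W'1; rewrite (le_trans (Wmax _ W'1)) //.
  exact: le_trans S_le0 (rho_ovr_ge0 K2 W0).
have : 2 <= dist_rest W0 k.
  apply: (dist_rest_ge_dual K2 (dotvv_delta R (Ordinal d0))) => j jk.
  by rewrite !col_mx_of_cols eqxx (negbTE jk) opprK dotvDl dotvv_delta; lra.
have -> : dist_rest W0 k = rho_ovr W0 by apply/eqP/negPn/negP; exact: no_rattler.
by have := Wmax W0 W01; lra.
Qed.

Lemma dual_optimum_eq_col W k h : (0 < d)%N ->
  (forall W', softmax_code W' -> forall k, ~ ovr_rattler W' k) ->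
  (forall W', tammes_solution W' -> forall k, ~ ovo_rattler W' k) ->
  softmax_code W -> tammes_solution W -> dotv h h = 1 ->
  (forall j, j != k -> rho_ovr W <= dotv (col k W - col j W) h) -> h = col k W.
Proof.
move=> d0 no_ovr_rattler no_ovo_rattler W_sm W_tm h1 sep.
have S_le := tammes_separation_le W_tm no_ovo_rattler h1 sep.
have dist_eq : dist_rest W k = rho_ovr W by apply/eqP/negPn/negP; exact: no_ovr_rattler.
apply: (dist_rest_dual_uniq K2 (W := W) (k := k)); rewrite ?dist_eq.
- exact: softmax_rho_ovr_gt0 d0 no_ovr_rattler W_sm.
- exact: h1.
- exact: OB_col W_sm.1.
- exact: sep.
- by move=> j jk; rewrite (le_trans S_le) // (sqr_rho_ovo_le_dotvB K2 W_sm.1 jk).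
Qed.

End Rattlers.

Section SoftmaxCodeExistence.
Variables (R : realType) (d K : nat).
Hypotheses (d0 : (0 < d)%N) (K2 : (2 <= K)%N).

Lemma OB_compact : compact (@OB R d K).
Proof.
apply: (@bounded_entries_compact _ _ _ _ 1) => [W W1 i j|].
  have := dotvv_ge_sqr (col j W) i; rewrite OB_col // mxE => sq_le1.
  by rewrite -(@ler_pXn2r _ 2) ?nnegrE ?normr_ge0 // expr1n real_normK ?num_real.
have -> : @OB R d K = \bigcap_(j in [set: 'I_K]) ((fun W => norm2 (col j W)) @^-1` [set 1]).
  by apply/seteqP; split=> W W1 j; [move=> _; exact: W1 | exact: W1].
apply: closed_bigI => j _; apply: preimage_closed; last exact: closed_eq.
by move=> W _; apply: continuous_comp; [exact: continuous_col | exact: continuous_norm2].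
Qed.

Lemma rho_ovr_usc (W : 'M[R]_(d, K)) r :
  rho_ovr W < r -> nbhs W [set W' | rho_ovr W' < r].
Proof.
move=> rho_lt; have [k Ek] := rho_ovr_attained K2 W.
have [y [l [l_ge0 [l_sum yE]]] ydist] :=
  dist_conv_attained (fun j => col j W) (col k W) (exists_neq K2 k).
pose phi (W' : 'M[R]_(d, K)) := norm2 (col k W' - \sum_(j | j != k) l j *: col j W').
have phi_cont : continuous phi.
  move=> W'; apply: continuous_comp; last exact: continuous_norm2.
  apply: continuousB; first exact: continuous_col.
  apply: (continuous_big add_continuous) => j _ W''.
  by apply: continuousZl_tmp; exact: continuous_col.
have phi_lt : phi W < r by rewrite /phi -yE -ydist; rewrite Ek in rho_lt.
have : nbhs W [set W' | phi W' < r] by exact: phi_cont W _ (lt_nbhsl phi_lt).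
apply: filterS => W' /= phiW'_lt.
apply: le_lt_trans (rho_ovr_le W' k) (le_lt_trans _ phiW'_lt).
by apply: dist_conv_le; exists l.
Qed.

Lemma exists_softmax_code : exists W : 'M[R]_(d, K), softmax_code W.
Proof.
have OB0 : @OB R d K !=set0.
  exists (mx_of_cols (fun=> delta_mx (Ordinal d0) 0)).
  by apply: mx_of_cols_OB => _; exact: dotvv_delta.
have rho_le2 (W : 'M[R]_(d, K)) : OB W -> rho_ovr W <= 2.
  move=> W1; set k : 'I_K := Ordinal (ltnW K2); have [j jk] := exists_neq K2 k.
  apply: le_trans (rho_ovr_le W k) _; apply: le_trans (dist_rest_le W jk) _.
  rewrite norm2_ler // dotvvB_unit ?OB_col //.
  by have := dotv_unit_geN1 (OB_col k W1) (OB_col j W1); lra.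
by have [W W1 Wmax] := compact_usc_max OB_compact OB0 rho_le2 rho_ovr_usc; exists W.
Qed.

End SoftmaxCodeExistence.

Section Argmax.
Variables (R : realType) (d K : nat).
Implicit Types f g : 'M[R]_(d, K) -> R.

Lemma argmax_OB_eq f g : (forall W, OB W -> g W <= f W) ->
  (forall W, argmax_OB f W -> f W <= g W) -> argmax_OB f !=set0 ->
  argmax_OB f = argmax_OB g.
Proof.
move=> gf fg [W0 W0max]; have [W01 f_le] := W0max.
apply/seteqP; split=> W [W1 Wmax]; split=> // W' W'1.
  by rewrite (le_trans (gf _ W'1)) // (le_trans (Wmax _ W'1)) // fg.
rewrite (le_trans (f_le _ W'1)) // (le_trans (fg _ W0max)) //.
by rewrite (le_trans (Wmax _ W01)) // gf.
Qed.

Lemma argmax_OB_sqr g : (forall W, OB W -> 0 <= g W) ->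
  argmax_OB (fun W => g W ^+ 2 / 2) = argmax_OB g.
Proof.
move=> g0; apply/seteqP; split=> W [W1 Wmax]; split=> // W' W'1.
  by have := Wmax W' W'1; rewrite ler_pM2r // ler_pXn2r ?nnegrE ?g0.
by rewrite ler_pM2r // ler_pXn2r ?nnegrE ?g0 ?Wmax.
Qed.

End Argmax.

Theorem mainTheorem8 (R : realType) (d K n : nat) :
  (1 <= d)%N -> (2 <= K)%N -> (1 <= n)%N ->
  (forall W : 'M[R]_(d, K), softmax_code W -> forall k : 'I_K, ~ ovr_rattler W k) ->
  (forall W : 'M[R]_(d, K), tammes_solution W -> forall k : 'I_K, ~ ovo_rattler W k) ->
  ((forall (W : 'M[R]_(d, K)) (H : 'M[R]_(d, K * n)), HardMax_optimal W H ->
      forall (k : 'I_K) (i : 'I_n), hcol H k i = col k W)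
   <->
   @softmax_code R d K = @tammes_solution R d K).
Proof.
move=> d0 K2 n0 no_ovr_rattler no_ovo_rattler; split=> [collapse | softmax_tammes].
  rewrite /softmax_code /tammes_solution.
  rewrite -(argmax_OB_sqr (fun W _ => rho_ovo_ge0 K2 W)).
  apply: (@argmax_OB_eq R d K _ (fun W => rho_ovo W ^+ 2 / 2)).
  - exact: sqr_rho_ovo_le_rho_ovr.
  - by move=> W; exact: (softmax_rho_ovr_le K2 n0 collapse).
  - exact: exists_softmax_code.
move=> W H opt k i; have [W_sm sep] := HardMax_optimal_softmax K2 n0 opt.
apply: (dual_optimum_eq_col K2 d0 no_ovr_rattler no_ovo_rattler W_sm _ (OB_col _ opt.2.1)).
  by rewrite -softmax_tammes.
exact: sep.
Qed.
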